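(* Let $\Gamma$ be a finitely generated abelian group, $\mathcal{A}=\{\alpha_1,\dots,\alpha_n\}\subset\Gamma$ a finite list, $G$ a torsion-wise finite abelian group, and fix $\alpha_i\in\mathcal{A}$. Let $\mathcal{A}'=\mathcal{A}\smallsetminus\{\alpha_i\}\subset\Gamma$ and $\mathcal{A}''=\{\overline{\alpha_j}\mid j\ne i\}\subset\Gamma/\langle\alpha_i\rangle$, both lists indexed by $[n]\smallsetminus\{i\}$ so that the variables $v_j$ ($j\neq i$) are attached to the same index. Then $$Z^G_{\mathcal{A}}(q,\boldsymbol v)=\begin{cases}Z^G_{\mathcal{A}'}(q,\boldsymbol v)+v_i\,Z^G_{\mathcal{A}''}(q,\boldsymbol v),&\text{if }\alpha_i\text{ is a loop},\\ Z^G_{\mathcal{A}'}(q,\boldsymbol v)+v_i\,q^{-1}\,Z^G_{\mathcal{A}''}(q,\boldsymbol v),&\text{otherwise.}\end{cases}$$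
   Context: An abelian group $G$ is torsion-wise finite if $G[d]=\{x\in G\mid dx=0\}$ is finite for every $d>0$. Lists are multisets with sublists distinguished by index. For a sublist $\mathcal{S}$ of a list in a finitely generated abelian group $\Gamma$, $r_{\mathcal{S}}$ is the rank of $\langle\mathcal{S}\rangle$ and the $G$-multiplicity is $m(\mathcal{S};G)=\#\mathrm{Hom}((\Gamma/\langle\mathcal{S}\rangle)_{\mathrm{tor}},G)$ (the subscript tor denotes the torsion subgroup). The multivariate $G$-Tutte polynomial is $Z^G_{\mathcal{A}}(q,v_1,\dots,v_n)=\sum_{\mathcal{S}\subset\mathcal{A}}m(\mathcal{S};G)\,q^{-r_{\mathcal{S}}}\prod_{\alpha_i\in\mathcal{S}}v_i$ (for $\mathcal{A}''$ the multiplicities and ranks are computed in $\Gamma/\langle\alpha_i\rangle$). An element $\alpha\in\mathcal{A}$ is a loop if $\alpha\in\Gamma_{\mathrm{tor}}$. *)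

From HB Require Import structures.
From mathcomp Require Import all_boot all_order all_algebra.
From Stdlib Require Import ClassicalEpsilon.
From Stdlib Require List.
Set Implicit Arguments. Unset Strict Implicit. Unset Printing Implicit Defensive.
Import Order.TTheory GRing.Theory Num.Theory.
Local Open Scope ring_scope.

Definition span (Gam : zmodType) (X : seq Gam) (x : Gam) : Prop :=
  exists c : nat -> int, x = \sum_(k < size X) X`_k *~ c k.

Definition fin_gen (Gam : zmodType) : Prop :=
  exists gens : seq Gam, forall x, span gens x.

Definition torsionwise_finite (G : zmodType) : Prop :=
  forall d : nat, (0 < d)%N ->
    exists l : list G, forall x : G, x *+ d = 0 -> List.In x l.

Definition is_loop (Gam : zmodType) (a : Gam) : Prop :=
  exists d : nat, (0 < d)%N /\ a *+ d = 0.

(* preimage in Gamma of the torsion subgroup of Gamma/<X> *)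
Definition tor_mod (Gam : zmodType) (X : seq Gam) (x : Gam) : Prop :=
  exists d : nat, (0 < d)%N /\ span X (x *+ d).

(* Homomorphisms (Gamma/<X>)_tor -> G, represented (bijectively) as maps
   Gamma -> G additive on tor_mod X, vanishing on <X>, and zero outside
   tor_mod X (normalisation making the representative unique). *)
Definition tor_hom (Gam G : zmodType) (X : seq Gam) (f : Gam -> G) : Prop :=
  [/\ (forall x y, tor_mod X x -> tor_mod X y -> f (x + y) = f x + f y),
      (forall x, span X x -> f x = 0) &
      (forall x, ~ tor_mod X x -> f x = 0)].

Definition card_is (T : Type) (P : T -> Prop) (n : nat) : Prop :=
  exists l : list T, List.NoDup l /\ length l = n /\
    forall x, P x <-> List.In x l.

(* the number of elements (0 if infinite; only used when finite) *)
Definition ncard (T : Type) (P : T -> Prop) : nat :=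
  epsilon (inhabits 0%N) (card_is P).

Definition mult (Gam : zmodType) (G : zmodType) (X : seq Gam) : nat :=
  ncard (@tor_hom Gam G X).

Definition indep_mod (Gam : zmodType) (B l : seq Gam) : Prop :=
  forall c : nat -> int, span B (\sum_(k < size l) l`_k *~ c k) ->
    forall k, (k < size l)%N -> c k = 0.

Definition rank_is (Gam : zmodType) (B S : seq Gam) (r : nat) : Prop :=
  (exists l : seq Gam, size l = r /\ (forall k, (k < size l)%N -> span S l`_k)
                       /\ indep_mod B l) /\
  (forall l : seq Gam, (forall k, (k < size l)%N -> span S l`_k) ->
                       indep_mod B l -> (size l <= r)%N).

Definition rank_mod (Gam : zmodType) (B S : seq Gam) : nat :=
  epsilon (inhabits 0%N) (rank_is B S).

(* Multivariate G-Tutte polynomial (evaluated) of the list (A j)_{j in D},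
   viewed in Gamma/<B>: B = [::] gives the list in Gamma itself, and
   B = [:: A i] gives the list of images in Gamma/<A i>.  Multiplicities
   of a sublist S are #Hom(((Gamma/<B>)/<S>)_tor, G) = #Hom((Gamma/<B ++ S>)_tor, G). *)
Definition Ztutte (R : comUnitRingType) (Gam G : zmodType) (n : nat)
    (B : seq Gam) (D : {set 'I_n}) (A : 'I_n -> Gam) (q : R) (v : 'I_n -> R) : R :=
  \sum_(S : {set 'I_n} | S \subset D)
     ((mult G (B ++ [seq A j | j in S]))%:R
        * (q^-1) ^+ (rank_mod B [seq A j | j in S])
        * \prod_(j in S) v j).

(* Split the subsets S of [n] according to whether i is in S.  For S = T + i we
   have <A_S> = <A_i, A_T>, so the multiplicity of S equals that of T in
   Gam/<A_i>, and rank <A_S> = rank of A_T modulo A_i, plus one unless A_i is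
   torsion.  For the rank comparison: an independent list in <a, S> stays
   independent modulo a once one term of a relation landing in <a> is dropped,
   and if d a = 0 then multiplying by d turns independence modulo a into plain
   independence.  The identity holds term by term in the definitions. *)

From Pilot Require Import Defs.
From HB Require Import structures.
From mathcomp Require Import all_boot all_order all_algebra.
From Stdlib Require Import ClassicalEpsilon Classical FunctionalExtensionality PropExtensionality.
From mathcomp Require Import ring zify.
Set Implicit Arguments. Unset Strict Implicit. Unset Printing Implicit Defensive.
Import GRing.Theory.
Local Open Scope ring_scope.
Local Notation span := Defs.span.

Section Span.
Variable Gam : zmodType.
Implicit Types (X Y : seq Gam) (x y : Gam).

Lemma span0 X : span X 0.
Proof. by exists (fun _ => 0); rewrite big1 // => k _; rewrite mulr0z. Qed.

Lemma spanD X x y : span X x -> span X y -> span X (x + y).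
Proof.
move=> [c1 ->] [c2 ->]; exists (fun k => c1 k + c2 k).
by rewrite -big_split /=; apply: eq_bigr => k _; rewrite mulrzDr.
Qed.

Lemma spanZ X x z : span X x -> span X (x *~ z).
Proof.
move=> [c ->]; exists (fun k => c k * z).
by rewrite mulrz_suml; apply: eq_bigr => k _; rewrite mulrzA.
Qed.

Lemma span_sum X m (F : 'I_m -> Gam) :
  (forall k, span X (F k)) -> span X (\sum_(k < m) F k).
Proof. by move=> hF; apply: (big_ind (span X)) => //; [apply: span0 | apply: spanD]. Qed.

Lemma span_nth X k : (k < size X)%N -> span X X`_k.
Proof.
move=> hk; exists (fun j => (j == k)%:Z).
rewrite (bigD1 (Ordinal hk)) //= eqxx big1 ?addr0 // => j /negbTE.
by rewrite -val_eqE /= => ->.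
Qed.

Lemma span_mem X y : y \in X -> span X y.
Proof. by move=> hy; rewrite -(nth_index 0 hy); apply: span_nth; rewrite index_mem. Qed.

Lemma span_subset X Y : (forall y, y \in X -> span Y y) ->
  forall x, span X x -> span Y x.
Proof. by move=> hXY x [c ->]; apply: span_sum => k; apply/spanZ/hXY/mem_nth. Qed.

Lemma span_nil x : span [::] x -> x = 0.
Proof. by move=> [c ->]; rewrite big_ord0. Qed.

Lemma span1 a x : span [:: a] x <-> exists t, x = a *~ t.
Proof.
split=> [[c ->]|[t ->]]; first by exists (c 0%N); rewrite big_ord1.
by exists (fun _ => t); rewrite big_ord1.
Qed.

Lemma span_cat X Y x :
  span (X ++ Y) x <-> exists y z, [/\ span X y, span Y z & x = y + z].
Proof.
split=> [[c ->]|[y [z [hy hz ->]]]].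
  rewrite size_cat big_split_ord /=.
  exists (\sum_(k < size X) X`_k *~ c k),
         (\sum_(k < size Y) Y`_k *~ c (size X + k)%N).
  split; [by exists c | by exists (fun k => c (size X + k)%N) |].
  congr (_ + _); apply: eq_bigr => k _; rewrite nth_cat /=.
    by rewrite ltn_ord.
  by rewrite ltnNge leq_addr /= addKn.
by apply: spanD; [move: hy | move: hz]; apply: span_subset => w hw;
  apply: span_mem; rewrite mem_cat hw ?orbT.
Qed.

End Span.

Lemma bounded_choice (T : Type) (t0 : T) (P : nat -> T -> Prop) m :
  (forall k, (k < m)%N -> exists x, P k x) ->
  exists f : nat -> T, forall k, (k < m)%N -> P k (f k).
Proof.
move=> hP; apply: (choice (fun k x => (k < m)%N -> P k x)) => k.
by case: (ltnP k m) => [/hP [x hx]|hmk]; [exists x | exists t0].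
Qed.

(* Clear the denominators of a nonzero rational left-kernel vector. *)
Lemma int_left_kernel m k (M : 'M[int]_(m, k)) :
  (k < m)%N -> exists2 c : 'rV[int]_m, c != 0 & c *m M = 0.
Proof.
move=> lt_km; pose Mq := map_mx (intr : int -> rat) M.
have /rowV0Pn [w /sub_kermxP w_ker nz_w] : kermx Mq != 0.
  rewrite -mxrank_eq0 mxrank_ker subn_eq0 -ltnNge.
  exact: leq_ltn_trans (rank_leq_col _) lt_km.
pose den : int := \prod_(j < m) denq (w 0 j).
pose c := \row_j (numq (w 0 j) * \prod_(j' < m | j' != j) denq (w 0 j')).
have map_c : map_mx intr c = den%:~R *: w.
  apply/rowP => j; rewrite /den (bigD1 j) //= !mxE !rmorphM /=.
  by rewrite numqE; ring.
exists c.
  apply: contraNneq nz_w => c0; apply/eqP/rowP => j.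
  have /rowP /(_ j) := map_c; rewrite c0 map_mx0 !mxE => /esym /eqP.
  rewrite mulf_eq0 intr_eq0 prodf_seq_eq0 => /orP [/hasP [j' _ /=]|/eqP //].
  by rewrite (negbTE (denq_neq0 _)).
have /matrixP cM0 : map_mx intr (c *m M) = 0 :> 'M[rat]_(1, k).
  by rewrite map_mxM map_c -scalemxAl w_ker scaler0.
by apply/matrixP => i j; move/eqP: (cM0 i j); rewrite !mxE intr_eq0 => /eqP.
Qed.

Section Rank.
Variable Gam : zmodType.
Implicit Types (B X S l : seq Gam) (a : Gam).

Lemma indep_size_le_span X l :
  (forall k, (k < size l)%N -> span X l`_k) -> indep_mod [::] l ->
  (size l <= size X)%N.
Proof.
move=> hl hind; rewrite leqNgt; apply/negP => lt_Xl.
have [M hM] := bounded_choice (fun _ => 0)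
  (P := fun j (e : nat -> int) => l`_j = \sum_(p < size X) X`_p *~ e p) hl.
pose MX := \matrix_(j < size l, p < size X) M j p.
have [c nz_c cM0] := int_left_kernel MX lt_Xl.
pose cf j := odflt 0 (omap (c 0) (insub j)).
have cfE (j : 'I_(size l)) : cf j = c 0 j by rewrite /cf valK.
apply/negP: nz_c; rewrite negbK; apply/eqP/rowP => j; rewrite mxE -cfE.
apply: (hind cf _ j (ltn_ord j)).
have -> : \sum_(j < size l) l`_j *~ cf j =
          \sum_(p < size X) X`_p *~ (c *m MX) 0 p.
  under eq_bigr => i _ do rewrite hM // cfE mulrz_suml.
  rewrite exchange_big; apply: eq_bigr => p _; rewrite !mxE mulrz_sumr.
  by apply: eq_bigr => i _; rewrite mxE -mulrzA mulrC.
by rewrite cM0 big1 => [|p _]; [apply: span0 | rewrite mxE mulr0z].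
Qed.

Lemma indep_modW B l : indep_mod B l -> indep_mod [::] l.
Proof. by move=> hi c /span_nil c0; apply: hi; rewrite c0; apply: span0. Qed.

Lemma ex_max_bounded (P : nat -> Prop) N :
  P 0%N -> (forall r, P r -> (r <= N)%N) ->
  exists r, P r /\ forall r', P r' -> (r' <= r)%N.
Proof.
move=> P0; elim: N => [|N IHN] hN; first by exists 0%N; split=> // r' /hN.
case: (classic (P N.+1)) => [PN1|nPN1]; first by exists N.+1.
apply: IHN => r Pr; move: (hN r Pr); rewrite leq_eqVlt => /orP [/eqP er|//].
by rewrite er in Pr.
Qed.

Lemma rank_mod_spec B S : rank_is B S (rank_mod B S).
Proof.
apply: epsilon_spec.
pose P r := exists l, [/\ size l = r, forall k, (k < size l)%N -> span S l`_k
                                    & indep_mod B l].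
have P0 : P 0%N by exists [::]; split=> // c _ k.
have Pbound r : P r -> (r <= size S)%N.
  by case=> l [<- hl hi]; apply: indep_size_le_span hl (indep_modW hi).
have [r [[l [hsz hl hi]] rmax]] := ex_max_bounded P0 Pbound.
by exists r; split=> [|l' hl' hi']; [exists l | apply: rmax; exists l'].
Qed.

Lemma size_indep_le_rank_mod X S l :
  (forall k, (k < size l)%N -> span (X ++ S) l`_k) -> indep_mod X l ->
  (size l <= rank_mod X S)%N.
Proof.
move=> hl hi.
have [z hz] : exists z : nat -> Gam, forall k, (k < size l)%N ->
    span S (z k) /\ span X (l`_k - z k).
  apply: (bounded_choice 0 (P := fun k z => span S z /\ span X (l`_k - z)))
    => k /hl /span_cat [y [z [hy hz ->]]].
  by exists z; rewrite addrK.
have [_ rank_max] := rank_mod_spec X S.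
rewrite -(size_mkseq z (size l)); apply: rank_max => [k|c hc k];
  rewrite size_mkseq => hk; first by rewrite nth_mkseq //; apply: (hz k hk).1.
apply: (hi c _ k hk).
have -> : \sum_(j < size l) l`_j *~ c j =
    \sum_(j < size (mkseq z (size l))) (mkseq z (size l))`_j *~ c j
    + \sum_(j < size l) (l`_j - z j) *~ c j.
  rewrite size_mkseq -big_split /=; apply: eq_bigr => j _.
  by rewrite nth_mkseq // -mulrzDl addrC subrK.
by apply: spanD hc (span_sum _) => j; apply/spanZ/(hz j (ltn_ord j)).2.
Qed.

Lemma loop_of_mulrz_eq0 a z : a *~ z = 0 -> z != 0 -> is_loop a.
Proof.
case: z => d; first by rewrite -pmulrn => ad0 nz_d; exists d; rewrite lt0n.
by rewrite NegzE mulrNz -pmulrn => /eqP; rewrite oppr_eq0 => /eqP ad0 _; exists d.+1.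
Qed.

Lemma rank_mod1_le_cons a S : (rank_mod [:: a] S <= rank_mod [::] (a :: S))%N.
Proof.
have [[l [<- [hl hi]]] _] := rank_mod_spec [:: a] S.
have [_ rank_max] := rank_mod_spec [::] (a :: S).
apply: (rank_max l _ (indep_modW hi)) => k hk.
by apply: span_subset (hl k hk) => y hy; apply: span_mem; rewrite inE hy orbT.
Qed.

Lemma rank_mod1_lt_cons a S :
  ~ is_loop a -> (rank_mod [:: a] S < rank_mod [::] (a :: S))%N.
Proof.
move=> nloop_a.
have [[l [<- [hl hi]]] _] := rank_mod_spec [:: a] S.
have [_ rank_max] := rank_mod_spec [::] (a :: S).
apply: (rank_max (a :: l)) => [[|k] hk|c /span_nil].
- by apply: span_mem; rewrite inE eqxx.
- by apply: span_subset (hl k hk) => y hy; apply: span_mem; rewrite inE hy orbT.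
rewrite big_ord_recl /= => sum0.
have c_tail k : (k < size l)%N -> c k.+1 = 0.
  move=> hk; apply: (hi (fun k => c k.+1) _ k hk).
  apply/span1; exists (- c 0%N); apply/eqP; rewrite mulrNz -addr_eq0 addrC.
  exact/eqP.
have c_head : c 0%N = 0.
  have [//|nz_c0] := eqVneq (c 0%N) 0; case: nloop_a.
  apply: (loop_of_mulrz_eq0 _ nz_c0); rewrite -[RHS]sum0 big1 ?addr0 // => j _.
  by rewrite /bump add1n c_tail // mulr0z.
by case=> [|k] hk //; apply: c_tail.
Qed.

Lemma bump_ltn_pred m p j : (p < m)%N -> (j < m.-1)%N -> (bump p j < m)%N.
Proof. by rewrite /bump; case: (p <= j)%N; lia. Qed.

Lemma indep_mod1_drop a l (c : nat -> int) t p :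
  indep_mod [::] l -> (p < size l)%N -> c p != 0 ->
  \sum_(k < size l) l`_k *~ c k = a *~ t ->
  indep_mod [:: a] (mkseq (fun j => l`_(bump p j)) (size l).-1).
Proof.
move=> hi hp nz_cp ht; set m := size l in hi hp ht *.
rewrite /indep_mod size_mkseq => c' /span1 [t' ht'] j hj.
have nz_t : t != 0.
  apply: contraNneq nz_cp => t0; apply/eqP/(hi c _ p hp).
  by rewrite ht t0 mulr0z; apply: span0.
pose c'' k := if k == p then 0 else c' (unbump p k).
have c''_sum : \sum_(k < m) l`_k *~ c'' k = a *~ t'.
  rewrite (bigD1_ord (Ordinal hp)) //= /c'' eqxx mulr0z add0r -ht'.
  apply: eq_bigr => k _; rewrite eq_sym (negbTE (neq_bump p k)) bumpK nth_mkseq //.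
have cross0 k : (k < m)%N -> c'' k * t - t' * c k = 0.
  move=> hk; apply: (hi (fun k => c'' k * t - t' * c k) _ k hk).
  suff -> : \sum_(k < m) l`_k *~ (c'' k * t - t' * c k) = 0 by apply: span0.
  transitivity ((\sum_(k < m) l`_k *~ c'' k) *~ t - (\sum_(k < m) l`_k *~ c k) *~ t').
    rewrite !mulrz_suml -sumrB; apply: eq_bigr => k' _.
    by rewrite mulrzBr !mulrzA [l`_k' *~ t' *~ _]mulrzAC.
  by rewrite c''_sum ht -!mulrzA mulrC subrr.
have t'0 : t' = 0.
  move: (cross0 p hp); rewrite /c'' eqxx mul0r sub0r => /eqP.
  by rewrite oppr_eq0 mulf_eq0 (negbTE nz_cp) orbF => /eqP.
move: (cross0 _ (bump_ltn_pred hp hj)).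
rewrite /c'' eq_sym (negbTE (neq_bump p j)) bumpK t'0.
by rewrite mul0r subr0 => /eqP; rewrite mulf_eq0 (negbTE nz_t) orbF => /eqP.
Qed.

Lemma rank_cons_le_rank_mod1 a S :
  (rank_mod [::] (a :: S) <= (rank_mod [:: a] S).+1)%N.
Proof.
have [[l [<- [hl hi]]] _] := rank_mod_spec [::] (a :: S).
case: (classic (exists c t p, [/\ (p < size l)%N, c p != 0 &
                 \sum_(k < size l) l`_k *~ c k = a *~ t])).
  case=> c [t [p [hp nz_cp ht]]].
  rewrite -(ltn_predK hp) ltnS.
  rewrite -[X in (X <= _)%N](size_mkseq (fun j => l`_(bump p j))).
  apply: size_indep_le_rank_mod (indep_mod1_drop hi hp nz_cp ht) => j.
  by rewrite size_mkseq => hj; rewrite nth_mkseq //; apply/hl/bump_ltn_pred.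
move=> no_comb; apply/leqW/size_indep_le_rank_mod => // c /span1 [t ht] k hk.
by apply/eqP/negP => /negP nz_ck; apply: no_comb; exists c, t, k.
Qed.

Lemma rank_cons_le_rank_mod1_loop a S :
  is_loop a -> (rank_mod [::] (a :: S) <= rank_mod [:: a] S)%N.
Proof.
move=> [d [d_gt0 ad0]].
have [[l [<- [hl hi]]] _] := rank_mod_spec [::] (a :: S).
rewrite -(size_map ( *~%R^~ d%:Z) l).
apply: size_indep_le_rank_mod => [k|c /span1 [t ht] k].
  by rewrite size_map => hk; rewrite (nth_map 0) //; apply/spanZ/hl.
rewrite size_map => hk.
(* d kills <a>, so d times the relation is a relation in Gam itself. *)
have : d%:Z * c k * d%:Z = 0.
  apply: (hi (fun k => d%:Z * c k * d%:Z)) => //.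
  suff -> : \sum_(k < size l) l`_k *~ (d%:Z * c k * d%:Z) = 0 by apply: span0.
  transitivity ((a *~ t) *~ d%:Z); last by rewrite mulrzAC -pmulrn ad0 mul0rz.
  rewrite -ht size_map mulrz_suml; apply: eq_bigr => j _.
  by rewrite (nth_map 0) // -!mulrzA mulrA.
have nz_d : d%:Z != 0 by rewrite eqz_nat -lt0n.
by move/eqP; rewrite !mulf_eq0 (negbTE nz_d) /= orbF => /eqP.
Qed.

Lemma rank_mod_cons_loop a S :
  is_loop a -> rank_mod [::] (a :: S) = rank_mod [:: a] S.
Proof.
move=> loop_a; apply/anti_leq.
by rewrite rank_cons_le_rank_mod1_loop ?rank_mod1_le_cons.
Qed.

Lemma rank_mod_cons_nonloop a S :
  ~ is_loop a -> rank_mod [::] (a :: S) = (rank_mod [:: a] S).+1.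
Proof.
by move=> nloop_a; apply/anti_leq; rewrite rank_cons_le_rank_mod1 rank_mod1_lt_cons.
Qed.

Lemma rank_mod_span_eq B S S' :
  (forall x, span S x <-> span S' x) -> rank_mod B S = rank_mod B S'.
Proof.
move=> SS'; have SeqS' : span S = span S'.
  by apply: functional_extensionality => x; apply: propositional_extensionality.
by rewrite /rank_mod /rank_is SeqS'.
Qed.

End Rank.

Lemma mult_span_eq (Gam G : zmodType) (X Y : seq Gam) :
  (forall x, span X x <-> span Y x) -> mult G X = mult G Y.
Proof.
move=> XY; have XeqY : span X = span Y.
  by apply: functional_extensionality => x; apply: propositional_extensionality.
by rewrite /mult /tor_hom /tor_mod XeqY.
Qed.

Lemma span_image_setU1 (Gam : zmodType) (T : finType) (A : T -> Gam) i
    (D : {set T}) x :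
  span [seq A j | j in i |: D] x <-> span (A i :: [seq A j | j in D]) x.
Proof.
split; apply: span_subset => y.
  case/imageP => j; rewrite in_setU1 => /orP [/eqP -> -> | jD ->]; apply: span_mem.
    by rewrite inE eqxx.
  by rewrite inE (image_f A jD) orbT.
rewrite inE => /orP [/eqP -> | /imageP [j jD ->]]; apply/span_mem/image_f.
  by rewrite setU11.
by rewrite in_setU1 jD orbT.
Qed.

Lemma sum_subsets_setD1 (V : nmodType) (T : finType) (D : {set T}) i
    (F : {set T} -> V) : i \in D ->
  \sum_(S : {set T} | S \subset D) F S =
  \sum_(S : {set T} | S \subset D :\ i) F S
  + \sum_(S : {set T} | S \subset D :\ i) F (i |: S).
Proof.
move=> iD; rewrite (bigID (fun S : {set T} => i \in S)) /= addrC; congr (_ + _).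
  by apply: eq_bigl => S; rewrite subsetD1 andbC.
rewrite (reindex_onto (fun S => i |: S) (fun S => S :\ i)) /=; last first.
  by move=> S /andP [_ iS]; rewrite setD1K.
apply: eq_bigl => S; rewrite setU11 andbT subsetD1 subUset sub1set iD /=.
congr (_ && _); apply/eqP/idP => [<-|niS]; first by rewrite setD11.
by rewrite setU1K.
Qed.

Theorem mainTheorem4 (Gam G : zmodType) (hGam : fin_gen Gam)
  (hG : torsionwise_finite G) (n : nat) (A : 'I_n -> Gam) (i : 'I_n)
  (R : comUnitRingType) (q : R) (hq : q \is a GRing.unit) (v : 'I_n -> R) :
  (is_loop (A i) ->
     Ztutte G [::] [set: 'I_n] A q v =
       Ztutte G [::] ([set: 'I_n] :\ i) A q v
       + v i * Ztutte G [:: A i] ([set: 'I_n] :\ i) A q v) /\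
  (~ is_loop (A i) ->
     Ztutte G [::] [set: 'I_n] A q v =
       Ztutte G [::] ([set: 'I_n] :\ i) A q v
       + v i * q^-1 * Ztutte G [:: A i] ([set: 'I_n] :\ i) A q v).
Proof.
split=> hloop; rewrite /Ztutte (sum_subsets_setD1 _ (in_setT i)); congr (_ + _);
  rewrite mulr_sumr; apply: eq_bigr => T; rewrite subsetD1 => /andP [_ niT];
  rewrite big_setU1 //= (mult_span_eq G (span_image_setU1 A i T))
          (rank_mod_span_eq _ (span_image_setU1 A i T)).
  by rewrite rank_mod_cons_loop // mulrCA.
rewrite rank_mod_cons_nonloop // exprS.
(* Abstract the multiplicity first: ring would otherwise unfold it. *)
set M := _%:R; set Q := _ ^+ _; set P := \prod_(_ in T) _; clearbody M Q P; ring.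
Qed.
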